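(* Consider the sub-$\ell^\infty$ structure on $\mathbb{R}^2$ defined by $Y_1=\partial_x+x\partial_y$, $Y_2=\partial_x-x\partial_y$. A regular bang-bang trajectory with $4$ or more arcs is not a time-minimizer.
   Context: Sub-$\ell^\infty$ structure defined by smooth vector fields $X_1,\dots,X_k$ on a manifold $M$ (here $X_1=Y_1$, $X_2=Y_2$): an admissible trajectory is an absolutely continuous curve $\gamma:[0,T]\to M$ together with a measurable control $u=(u_1,\dots,u_k):[0,T]\to\mathbb{R}^k$ with $|u_i(t)|\le1$ for all $i$ and a.e. $t$, such that $\dot\gamma(t)=\sum_i u_i(t)X_i(\gamma(t))$ for a.e. $t$. It is a time-minimizer (optimal) if no admissible trajectory joins $\gamma(0)$ to $\gamma(T)$ in time less than $T$. An extremal pair is a pair $(\lambda,\gamma)$ where $\gamma$ is admissible with control $u$ and $\lambda:[0,T]\to T^*M$ is absolutely continuous with $\lambda(t)\in T^*_{\gamma(t)}M\setminus\{0\}$, such that, with $\mathcal H(\lambda,p,u)=\sum_i u_i\langle\lambda,X_i(p)\rangle$, in canonical coordinates $\dot\lambda=-\partial_p\mathcal H(\lambda,\gamma,u)$, $\dot\gamma=\partial_\lambda\mathcal H(\lambda,\gamma,u)$ a.e., and there is a constant $\lambda_0\ge0$ with $\sum_iu_i(t)\langle\lambda(t),X_i(\gamma(t))\rangle=\sum_i|\langle\lambda(t),X_i(\gamma(t))\rangle|=\lambda_0$ for a.e. $t$; $\gamma$ is then an extremal trajectory and $\lambda$ an extremal lift. The switching functions are $\varphi_j(t)=\langle\lambda(t),X_j(\gamma(t))\rangle$.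 The restriction of an extremal pair to an open interval $I$ is a regular arc if $\varphi_j(t)\ne0$ for all $t\in I$ and all $j$; arcs are taken maximal (not contained in a strictly larger open interval with the same property). A regular bang-bang trajectory is an extremal trajectory with an extremal lift such that $[0,T]$ minus finitely many points is a finite union of maximal regular arcs (on each of which the control is then constant with values in $\{1,-1\}^k$); these are its arcs. *)

From Stdlib Require Import Reals Lra List.
Open Scope R_scope.

Definition Y1 (p : R * R) : R * R := (1, fst p).
Definition Y2 (p : R * R) : R * R := (1, - fst p).

Definition pairing (l v : R * R) : R := fst l * fst v + snd l * snd v.

Definition negligible (N : R -> Prop) : Prop :=
  forall eps, 0 < eps ->
    exists a b : nat -> R,
      (forall n, a n <= b n) /\
      (forall t, N t -> exists n, a n < t < b n) /\
      (forall n, sum_f_R0 (fun k => b k - a k) n <= eps).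

Definition ae_on (T : R) (P : R -> Prop) : Prop :=
  exists N, negligible N /\ forall t, 0 < t < T -> ~ N t -> P t.

Inductive borel : (R -> Prop) -> Prop :=
| borel_interval a b : borel (fun t => a < t < b)
| borel_compl A : borel A -> borel (fun t => ~ A t)
| borel_union (F : nat -> R -> Prop) :
    (forall n, borel (F n)) -> borel (fun t => exists n, F n t)
| borel_ext A B : (forall t, A t <-> B t) -> borel A -> borel B.

Definition measurable_fun (f : R -> R) : Prop :=
  forall c, borel (fun t => f t < c).

Definition abs_cont_on (T : R) (f : R -> R) : Prop :=
  forall eps, 0 < eps -> exists delta, 0 < delta /\
    forall (n : nat) (a b : nat -> R),
      (forall k, (k <= n)%nat -> 0 <= a k <= b k /\ b k <= T) ->
      (forall k, (k < n)%nat -> b k <= a (S k)) ->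
      sum_f_R0 (fun k => b k - a k) n < delta ->
      sum_f_R0 (fun k => Rabs (f (b k) - f (a k))) n < eps.

Definition abs_cont_on2 (T : R) (g : R -> R * R) : Prop :=
  abs_cont_on T (fun t => fst (g t)) /\ abs_cont_on T (fun t => snd (g t)).

Definition admissible (T : R) (gamma : R -> R * R) (u : R -> R * R) : Prop :=
  0 <= T /\
  measurable_fun (fun t => fst (u t)) /\ measurable_fun (fun t => snd (u t)) /\
  ae_on T (fun t => Rabs (fst (u t)) <= 1 /\ Rabs (snd (u t)) <= 1) /\
  abs_cont_on2 T gamma /\
  ae_on T (fun t =>
    derivable_pt_lim (fun s => fst (gamma s)) t
      (fst (u t) * fst (Y1 (gamma t)) + snd (u t) * fst (Y2 (gamma t))) /\
    derivable_pt_lim (fun s => snd (gamma s)) t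
      (fst (u t) * snd (Y1 (gamma t)) + snd (u t) * snd (Y2 (gamma t)))).

Definition time_minimizer (T : R) (gamma : R -> R * R) : Prop :=
  (exists u, admissible T gamma u) /\
  forall T' gamma' u', admissible T' gamma' u' ->
    gamma' 0 = gamma 0 -> gamma' T' = gamma T -> ~ (T' < T).

Definition Ham (l p u : R * R) : R :=
  fst u * pairing l (Y1 p) + snd u * pairing l (Y2 p).

Definition extremal_pair (T : R) (lam gamma u : R -> R * R) : Prop :=
  admissible T gamma u /\
  abs_cont_on2 T lam /\
  (forall t, 0 <= t <= T -> lam t <> (0, 0)) /\
  ae_on T (fun t =>
    exists dl1 dl2 dg1 dg2,
      derivable_pt_lim (fun s => fst (lam s)) t dl1 /\
      derivable_pt_lim (fun s => snd (lam s)) t dl2 /\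
      derivable_pt_lim (fun s => fst (gamma s)) t dg1 /\
      derivable_pt_lim (fun s => snd (gamma s)) t dg2 /\
      (* lambda' = - d_p H *)
      derivable_pt_lim (fun x => Ham (lam t) (x, snd (gamma t)) (u t))
        (fst (gamma t)) (- dl1) /\
      derivable_pt_lim (fun y => Ham (lam t) (fst (gamma t), y) (u t))
        (snd (gamma t)) (- dl2) /\
      (* gamma' = d_lambda H *)
      derivable_pt_lim (fun a => Ham (a, snd (lam t)) (gamma t) (u t))
        (fst (lam t)) dg1 /\
      derivable_pt_lim (fun b => Ham (fst (lam t), b) (gamma t) (u t))
        (snd (lam t)) dg2) /\
  exists lam0, 0 <= lam0 /\
    ae_on T (fun t =>
      Ham (lam t) (gamma t) (u t) = lam0 /\
      Rabs (pairing (lam t) (Y1 (gamma t))) +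
      Rabs (pairing (lam t) (Y2 (gamma t))) = lam0).

Definition phi1 (lam gamma : R -> R * R) (t : R) : R :=
  pairing (lam t) (Y1 (gamma t)).
Definition phi2 (lam gamma : R -> R * R) (t : R) : R :=
  pairing (lam t) (Y2 (gamma t)).

Definition regular_on (lam gamma : R -> R * R) (a b : R) : Prop :=
  forall t, a < t < b -> phi1 lam gamma t <> 0 /\ phi2 lam gamma t <> 0.

Definition maximal_regular_arc (T : R) (lam gamma : R -> R * R) (a b : R) : Prop :=
  0 <= a /\ a < b /\ b <= T /\ regular_on lam gamma a b /\
  forall a' b', 0 <= a' -> a' <= a -> b <= b' -> b' <= T ->
    (a' < a \/ b < b') -> ~ regular_on lam gamma a' b'.

Definition regular_bang_bang_arcs (T : R) (gamma : R -> R * R) (n : nat) : Prop :=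
  exists (u lam : R -> R * R) (arcs : list (R * R)) (F : list R),
    extremal_pair T lam gamma u /\
    NoDup arcs /\ length arcs = n /\
    (forall ab, In ab arcs -> maximal_regular_arc T lam gamma (fst ab) (snd ab)) /\
    (forall t, 0 <= t <= T ->
       (~ In t F <-> exists ab, In ab arcs /\ fst ab < t < snd ab)).

(* The Hamiltonian does not depend on y, so the covector has a constant y-component c and
   the switching functions satisfy phi1 - phi2 = 2 c x.  Along an arc with control (s1, s2)
   they are affine with slopes 2 c s2 and - 2 c s1, and at each junction one of them
   vanishes.  Sign bookkeeping on the first four arcs leaves two patterns, alternating
   horizontal arcs (control (s, s)) and vertical arcs (control (a, - a)), in which the
   horizontal arc lying between the two vertical ones maps x to - x.  The two vertical arcs
   then raise y at the same rate and can be merged, while the horizontal ones partially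
   cancel: two bang arcs reach the end of the fourth arc strictly earlier, and following
   gamma afterwards gives a faster admissible trajectory. *)

From Stdlib Require Import Reals Lra Lia List Classical ZArith.
From Coquelicot Require Import Coquelicot.
Open Scope R_scope.

Fixpoint sum_below (g : nat -> R) (m : nat) : R :=
  match m with O => 0 | S m' => sum_below g m' + g m' end.

Lemma sum_below_ext g h m :
  (forall k, (k < m)%nat -> g k = h k) -> sum_below g m = sum_below h m.
Proof.
  induction m as [|m IH]; intros H; simpl; auto.
  rewrite IH by (intros; apply H; lia). rewrite H by lia. reflexivity.
Qed.

Lemma sum_below_le g h m :
  (forall k, (k < m)%nat -> g k <= h k) -> sum_below g m <= sum_below h m.
Proof.
  induction m as [|m IH]; intros H; simpl; [lra|].
  assert (sum_below g m <= sum_below h m) by (apply IH; intros; apply H; lia).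
  assert (g m <= h m) by (apply H; lia). lra.
Qed.

Lemma sum_below_S g m : sum_below g (S m) = sum_f_R0 g m.
Proof.
  induction m as [|m IH]; [simpl; ring|].
  change (sum_below g (S (S m))) with (sum_below g (S m) + g (S m)).
  rewrite IH. reflexivity.
Qed.

Lemma sum_f_R0_drop g j M : (j <= M)%nat ->
  sum_f_R0 (fun n => if Nat.eqb n j then 0 else g n) M = sum_f_R0 g M - g j.
Proof.
  induction M as [|M IH]; intros Hj.
  - assert (j = 0%nat) by lia; subst; simpl; lra.
  - rewrite !tech5. destruct (Nat.eq_dec j (S M)) as [->|Hne].
    + rewrite Nat.eqb_refl.
      rewrite (sum_eq _ g) by (intros i Hi; destruct (Nat.eqb_spec i (S M)); [lia|reflexivity]).
      lra.
    + rewrite IH by lia. destruct (Nat.eqb_spec (S M) j); [lia|lra].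
Qed.

Lemma sum_below_reindex_le (g : nat -> R) (id : nat -> nat) m M :
  (forall n, 0 <= g n) ->
  (forall k, (k < m)%nat -> (id k <= M)%nat) ->
  (forall j k, (j < m)%nat -> (k < m)%nat -> id j = id k -> j = k) ->
  sum_below (fun k => g (id k)) m <= sum_f_R0 g M.
Proof.
  revert g; induction m as [|m IH]; intros g Hg Hb Hi; simpl.
  - apply cond_pos_sum; auto.
  - set (g' := fun n => if Nat.eqb n (id m) then 0 else g n).
    assert (E : sum_below (fun k => g (id k)) m = sum_below (fun k => g' (id k)) m).
    { apply sum_below_ext. intros k Hk. unfold g'.
      destruct (Nat.eqb_spec (id k) (id m)) as [e|]; [apply Hi in e; lia|reflexivity]. }
    assert (sum_below (fun k => g' (id k)) m <= sum_f_R0 g' M).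
    { apply IH.
      - intros n; unfold g'; destruct (Nat.eqb n (id m)); auto; lra.
      - intros; apply Hb; lia.
      - intros; apply Hi; auto; lia. }
    unfold g' at 2 in H. rewrite sum_f_R0_drop in H by (apply Hb; lia). lra.
Qed.

Lemma nat_bound_below (id : nat -> nat) m : exists M, forall k, (k < m)%nat -> (id k <= M)%nat.
Proof.
  induction m as [|m [M HM]]; [exists O; intros; lia|].
  exists (Nat.max M (id m)). intros k Hk.
  destruct (Nat.eq_dec k m) as [->|]; [lia|]. specialize (HM k ltac:(lia)); lia.
Qed.

(* [abs_cont_on T] is convertible to [ac_on 0 T]. *)
Definition ac_on (lo hi : R) (f : R -> R) : Prop :=
  forall eps, 0 < eps -> exists delta, 0 < delta /\
    forall (n : nat) (a b : nat -> R),
      (forall k, (k <= n)%nat -> lo <= a k <= b k /\ b k <= hi) ->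
      (forall k, (k < n)%nat -> b k <= a (S k)) ->
      sum_f_R0 (fun k => b k - a k) n < delta ->
      sum_f_R0 (fun k => Rabs (f (b k) - f (a k))) n < eps.

Lemma derivable_pt_lim_0_local_bound f c e : derivable_pt_lim f c 0 -> 0 < e ->
  exists eta, 0 < eta /\ forall z, Rabs (z - c) < eta -> Rabs (f z - f c) <= e * Rabs (z - c).
Proof.
  intros Hd He. destruct (Hd e He) as [eta Heta].
  exists eta. split; [apply cond_pos|]. intros z Hz.
  destruct (Req_dec z c) as [->|Hzc].
  { unfold Rminus; rewrite !Rplus_opp_r, Rabs_R0; lra. }
  specialize (Heta (z - c) ltac:(lra) Hz).
  replace (c + (z - c)) with z in Heta by ring. rewrite Rminus_0_r in Heta.
  unfold Rdiv in Heta. rewrite Rabs_mult, Rabs_inv in Heta.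
  assert (0 < Rabs (z - c)) by (apply Rabs_pos_lt; lra).
  apply Rmult_lt_compat_r with (r := Rabs (z - c)) in Heta; auto.
  rewrite Rmult_assoc, Rinv_l in Heta by lra. lra.
Qed.

Section ChainCertificate.
Variables (lo : R) (f : R -> R) (e : R) (a b : nat -> R).

Definition chain_cert (x : R) : Prop :=
  exists m (sa sb : nat -> R) (id : nat -> nat),
    (forall k, (k < m)%nat -> lo <= sa k /\ sa k < sb k /\ sb k <= x) /\
    (forall k, (S k < m)%nat -> sb k <= sa (S k)) /\
    (forall k, (k < m)%nat -> a (id k) <= sa k /\ sb k <= b (id k)) /\
    (forall j i, (j < m)%nat -> (i < m)%nat -> id j = id i -> j = i) /\
    Rabs (f x - f lo) <= e * (x - lo) + sum_below (fun k => Rabs (f (sb k) - f (sa k))) m.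

Hypothesis He : 0 < e.

Lemma chain_cert_lo : chain_cert lo.
Proof.
  exists O, (fun _ => 0), (fun _ => 0), (fun _ => O).
  repeat split; intros; try lia. simpl. unfold Rminus. rewrite !Rplus_opp_r, Rabs_R0. lra.
Qed.

Lemma chain_cert_flat x y : x <= y -> Rabs (f y - f x) <= e * (y - x) ->
  chain_cert x -> chain_cert y.
Proof.
  intros Hxy Hf (m & sa & sb & id & H1 & H2 & H3 & H4 & H5).
  exists m, sa, sb, id. split; [|split; [auto|split; [auto|split; [auto|]]]].
  - intros k Hk; destruct (H1 k Hk) as (?&?&?); repeat split; lra.
  - pose proof (Rabs_triang (f y - f x) (f x - f lo)) as Htri.
    replace (f y - f x + (f x - f lo)) with (f y - f lo) in Htri by ring. lra.
Qed.

Lemma chain_cert_covered x z n : lo <= x -> x < z -> a n <= x -> z <= b n ->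
  (x = a n \/ x = lo) -> chain_cert x -> chain_cert z.
Proof.
  intros Hlo Hxz Han Hbn Hx (m & sa & sb & id & H1 & H2 & H3 & H4 & H5).
  exists (S m), (fun k => if Nat.eqb k m then x else sa k),
    (fun k => if Nat.eqb k m then z else sb k),
    (fun k => if Nat.eqb k m then n else id k).
  refine (conj _ (conj _ (conj _ (conj _ _)))).
  - intros k Hk; destruct (Nat.eqb_spec k m); [lra|].
    destruct (H1 k ltac:(lia)) as (?&?&?). lra.
  - intros k Hk. destruct (Nat.eqb_spec k m); [lia|].
    destruct (Nat.eqb_spec (S k) m); [|apply H2; lia].
    assert (sb k <= x) by (apply H1; lia). lra.
  - intros k Hk; destruct (Nat.eqb_spec k m); [lra|]. apply H3; lia.
  - (* earlier pieces are nondegenerate subintervals of [lo, x], while x is a n or lo *)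
    intros j k Hj Hk. destruct (Nat.eqb_spec j m), (Nat.eqb_spec k m); try lia.
    + intros Hn. exfalso. destruct (H1 k ltac:(lia)) as (?&?&?). destruct (H3 k ltac:(lia)).
      rewrite <- Hn in *. destruct Hx; lra.
    + intros Hn. exfalso. destruct (H1 j ltac:(lia)) as (?&?&?). destruct (H3 j ltac:(lia)).
      rewrite Hn in *. destruct Hx; lra.
    + apply H4; lia.
  - simpl. rewrite Nat.eqb_refl.
    rewrite (sum_below_ext _ (fun k => Rabs (f (sb k) - f (sa k)))).
    2:{ intros k Hk. destruct (Nat.eqb_spec k m); [lia|auto]. }
    pose proof (Rabs_triang (f z - f x) (f x - f lo)) as Htri.
    replace (f z - f x + (f x - f lo)) with (f z - f lo) in Htri by ring.
    assert (e * (x - lo) <= e * (z - lo)) by (apply Rmult_le_compat_l; lra). lra.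
Qed.

Lemma chain_cert_max_lo c z : z < c ->
  (forall y, lo <= y < c -> chain_cert y) -> chain_cert (Rmax lo z).
Proof.
  intros Hzc Hbelow. unfold Rmax. destruct (Rle_dec lo z); [apply Hbelow; lra|].
  apply chain_cert_lo.
Qed.

Section Extension.
Variables (hi c : R).
Hypotheses (Hc : lo <= c <= hi) (Hbelow : forall y, lo <= y < c -> chain_cert y).

Lemma chain_cert_extend_covered n : a n < c < b n ->
  forall y, lo <= y <= Rmin (b n) hi -> chain_cert y.
Proof.
  intros Hn y Hy.
  destruct (Rlt_dec y c) as [Hyc|Hyc]; [apply Hbelow; lra|apply Rnot_lt_le in Hyc].
  assert (Hymin : y <= b n) by (pose proof (Rmin_l (b n) hi); lra).
  pose proof (chain_cert_max_lo c (a n) ltac:(lra) Hbelow) as Cy0.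
  pose proof (Rmax_l lo (a n)); pose proof (Rmax_r lo (a n)).
  assert (Rmax lo (a n) <= c) by (apply Rmax_lub; lra).
  destruct (Req_dec (Rmax lo (a n)) y) as [E0|E0]; [rewrite <- E0; auto|].
  apply (chain_cert_covered (Rmax lo (a n)) y n); auto; try lra.
  unfold Rmax; destruct (Rle_dec lo (a n)); auto.
Qed.

Lemma chain_cert_extend_flat eta : 0 < eta ->
  (forall z, Rabs (z - c) < eta -> Rabs (f z - f c) <= e * Rabs (z - c)) ->
  forall y, lo <= y <= Rmin (c + eta / 2) hi -> chain_cert y.
Proof.
  intros Heta Hloc y Hy.
  destruct (Rlt_dec y c) as [Hyc|Hyc]; [apply Hbelow; lra|apply Rnot_lt_le in Hyc].
  assert (Hymin : y <= c + eta / 2) by (pose proof (Rmin_l (c + eta / 2) hi); lra).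
  set (w := Rmax lo (c - eta / 2)).
  assert (Hw : w <= c /\ lo <= w /\ c - eta / 2 <= w).
  { unfold w. split; [apply Rmax_lub; lra|split; [apply Rmax_l|apply Rmax_r]]. }
  apply (chain_cert_flat w y); [lra| |apply (chain_cert_max_lo c); auto; lra].
  assert (H1 : Rabs (f y - f c) <= e * (y - c)).
  { rewrite <- (Rabs_right (y - c)) by lra. apply Hloc. rewrite Rabs_right; lra. }
  assert (H2 : Rabs (f w - f c) <= e * (c - w)).
  { replace (c - w) with (Rabs (w - c)) by (rewrite Rabs_left1; lra).
    apply Hloc. rewrite Rabs_left1; lra. }
  pose proof (Rabs_triang (f y - f c) (- (f w - f c))) as Htri.
  rewrite Rabs_Ropp in Htri. replace (f y - f c + - (f w - f c)) with (f y - f w) in Htri by ring.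
  lra.
Qed.

End Extension.

(* Real induction: the supremum of the points up to which certificates exist is [hi]. *)
Lemma chain_cert_hi hi : lo <= hi ->
  (forall t, lo <= t <= hi -> (exists n, a n < t < b n) \/ derivable_pt_lim f t 0) ->
  chain_cert hi.
Proof.
  intros Hlh Hcov.
  set (E := fun x => lo <= x <= hi /\ forall y, lo <= y <= x -> chain_cert y).
  assert (HEb : bound E) by (exists hi; intros x [Hx _]; lra).
  assert (HElo : E lo).
  { split; [lra|]. intros y Hy. replace y with lo by lra. apply chain_cert_lo. }
  destruct (completeness E HEb (ex_intro _ lo HElo)) as (c & Hub & Hlub).
  assert (Hloc : lo <= c) by (apply Hub; auto).
  assert (Hchi : c <= hi) by (apply Hlub; intros x [Hx _]; lra).
  assert (Hbelow : forall y, lo <= y < c -> chain_cert y).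
  { intros y Hy. destruct (classic (exists x, E x /\ y < x)) as [(x & [_ Hx] & Hyx)|Hn].
    - apply Hx; lra.
    - exfalso. assert (c <= y); [|lra]. apply Hlub. intros x Hx.
      destruct (Rle_dec x y) as [|Hxy]; auto. exfalso; apply Hn; exists x; split; auto; lra. }
  assert (Hext : exists r, c < r /\ forall y, lo <= y <= Rmin r hi -> chain_cert y).
  { destruct (Hcov c ltac:(lra)) as [(n & Hn)|Hd0].
    - exists (b n). split; [lra|]. apply (chain_cert_extend_covered hi c); auto.
    - destruct (derivable_pt_lim_0_local_bound f c e Hd0 He) as (eta & Heta & Hl).
      exists (c + eta / 2). split; [lra|]. apply (chain_cert_extend_flat hi c); auto. }
  destruct Hext as (r & Hr & Hr2).
  assert (HEr : E (Rmin r hi)).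
  { split; [split|]; auto. apply Rmin_glb; lra. apply Rmin_r. }
  assert (Hw : Rmin r hi = hi).
  { apply Hub in HEr. unfold Rmin in *. destruct (Rle_dec r hi); lra. }
  apply Hr2. rewrite Hw. lra.
Qed.

End ChainCertificate.

Lemma ac_on_null_derivative_const lo hi f : lo <= hi -> ac_on lo hi f ->
  (forall eps, 0 < eps -> exists a b : nat -> R, (forall n, a n <= b n) /\
     (forall n, sum_f_R0 (fun k => b k - a k) n <= eps) /\
     (forall t, lo <= t <= hi -> (exists n, a n < t < b n) \/ derivable_pt_lim f t 0)) ->
  f hi = f lo.
Proof.
  intros Hlh Hac Hcov.
  assert (Hvar : forall e eps, 0 < e -> 0 < eps -> Rabs (f hi - f lo) <= e * (hi - lo) + eps).
  { intros e eps He Heps.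
    destruct (Hac eps Heps) as (delta & Hd & Hacd).
    destruct (Hcov (delta / 2) ltac:(lra)) as (a & b & Hab & Hsum & Hc).
    destruct (chain_cert_hi lo f e a b He hi Hlh Hc) as (m & sa & sb & id & H1 & H2 & H3 & H4 & H5).
    destruct m as [|m]; [simpl in H5; lra|].
    rewrite sum_below_S in H5.
    assert (sum_f_R0 (fun k => Rabs (f (sb k) - f (sa k))) m < eps); [|lra].
    apply Hacd.
    - intros k Hk. destruct (H1 k ltac:(lia)) as (?&?&?). repeat split; lra.
    - intros k Hk. apply H2. lia.
    - rewrite <- sum_below_S.
      destruct (nat_bound_below id (S m)) as [M HM].
      assert (sum_below (fun k => sb k - sa k) (S m) <=
              sum_below (fun k => b (id k) - a (id k)) (S m)).
      { apply sum_below_le. intros k Hk. destruct (H3 k Hk). lra. }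
      assert (sum_below (fun k => b (id k) - a (id k)) (S m) <= sum_f_R0 (fun n => b n - a n) M).
      { apply (sum_below_reindex_le (fun n => b n - a n) id); auto.
        intros n; specialize (Hab n); lra. }
      specialize (Hsum M). lra. }
  destruct (Req_dec (f hi) (f lo)) as [|Hne]; auto. exfalso.
  set (z := Rabs (f hi - f lo)).
  assert (Hz : 0 < z) by (apply Rabs_pos_lt; lra).
  set (e := z / 4 / (hi - lo + 1)).
  assert (He : 0 < e) by (apply Rdiv_lt_0_compat; lra).
  assert (e * (hi - lo) <= z / 4).
  { apply Rle_trans with (e * (hi - lo + 1)); [apply Rmult_le_compat_l; lra|].
    unfold e; right; field; lra. }
  specialize (Hvar e (z / 4) He ltac:(lra)). fold z in Hvar. lra.
Qed.

Lemma ac_on_sub lo hi lo' hi' f : ac_on lo hi f -> lo <= lo' -> hi' <= hi -> ac_on lo' hi' f.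
Proof.
  intros H H1 H2 eps Heps. destruct (H eps Heps) as (d & Hd & Hf). exists d; split; auto.
  intros n a b Hab Ho Hs. apply Hf; auto. intros k Hk; destruct (Hab k Hk); split; lra.
Qed.

Lemma ac_on_ext lo hi f g : (forall t, f t = g t) -> ac_on lo hi f -> ac_on lo hi g.
Proof.
  intros E H eps Heps. destruct (H eps Heps) as (d & Hd & Hf). exists d; split; auto.
  intros n a b Hab Ho Hs. rewrite <- (sum_eq (fun k => Rabs (f (b k) - f (a k)))).
  - apply Hf; auto.
  - intros; rewrite !E; auto.
Qed.

Lemma ac_on_plus lo hi f g : ac_on lo hi f -> ac_on lo hi g -> ac_on lo hi (fun t => f t + g t).
Proof.
  intros Hf Hg eps Heps. destruct (Hf (eps / 2) ltac:(lra)) as (d1 & Hd1 & H1).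
  destruct (Hg (eps / 2) ltac:(lra)) as (d2 & Hd2 & H2).
  exists (Rmin d1 d2). split; [apply Rmin_pos; auto|].
  intros n a b Hab Ho Hs.
  pose proof (Rmin_l d1 d2); pose proof (Rmin_r d1 d2).
  specialize (H1 n a b Hab Ho ltac:(lra)). specialize (H2 n a b Hab Ho ltac:(lra)).
  assert (sum_f_R0 (fun k => Rabs (f (b k) + g (b k) - (f (a k) + g (a k)))) n <=
          sum_f_R0 (fun k => Rabs (f (b k) - f (a k)) + Rabs (g (b k) - g (a k))) n).
  { apply sum_Rle. intros k _.
    replace (f (b k) + g (b k) - (f (a k) + g (a k)))
      with ((f (b k) - f (a k)) + (g (b k) - g (a k))) by ring.
    apply Rabs_triang. }
  pose proof (sum_plus (fun k => Rabs (f (b k) - f (a k)))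
    (fun k => Rabs (g (b k) - g (a k))) n). lra.
Qed.

Lemma ac_on_lipschitz lo hi f K : 0 <= K ->
  (forall s t, lo <= s <= hi -> lo <= t <= hi -> Rabs (f t - f s) <= K * Rabs (t - s)) ->
  ac_on lo hi f.
Proof.
  intros HK Hl eps Heps. exists (eps / (K + 1)). split; [apply Rdiv_lt_0_compat; lra|].
  intros n a b Hab Ho Hs.
  apply Rle_lt_trans with (sum_f_R0 (fun k => (b k - a k) * K) n).
  - apply sum_Rle. intros k Hk. destruct (Hab k Hk).
    rewrite Rmult_comm, <- (Rabs_right (b k - a k)) by lra. apply Hl; lra.
  - rewrite <- scal_sum.
    apply Rle_lt_trans with (K * (eps / (K + 1))); [apply Rmult_le_compat_l; lra|].
    assert (0 < eps / (K + 1)) by (apply Rdiv_lt_0_compat; lra).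
    apply Rlt_le_trans with ((K + 1) * (eps / (K + 1))); [nra|right; field; lra].
Qed.

Lemma ac_on_const lo hi k : ac_on lo hi (fun _ => k).
Proof.
  apply (ac_on_lipschitz _ _ _ 0); [lra|]. intros.
  unfold Rminus; rewrite Rplus_opp_r, Rabs_R0; lra.
Qed.

Lemma ac_on_affine lo hi v k : ac_on lo hi (fun t => v * t + k).
Proof.
  apply (ac_on_lipschitz _ _ _ (Rabs v)); [apply Rabs_pos|]. intros s t _ _.
  replace (v * t + k - (v * s + k)) with (v * (t - s)) by ring. rewrite Rabs_mult; lra.
Qed.

Lemma ac_on_comp lo hi lo' hi' f m : ac_on lo hi f ->
  (forall s t, lo' <= s -> s <= t -> t <= hi' -> m s <= m t /\ m t - m s <= t - s) ->
  (forall t, lo' <= t <= hi' -> lo <= m t <= hi) ->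
  ac_on lo' hi' (fun t => f (m t)).
Proof.
  intros Hf Hm Hr eps Heps. destruct (Hf eps Heps) as (d & Hd & H). exists d; split; auto.
  intros n a b Hab Ho Hs. apply (H n (fun k => m (a k)) (fun k => m (b k))).
  - intros k Hk. destruct (Hab k Hk). destruct (Hm (a k) (b k)); try lra.
    pose proof (Hr (a k) ltac:(lra)); pose proof (Hr (b k) ltac:(lra)). lra.
  - intros k Hk. destruct (Hab k ltac:(lia)). destruct (Hab (S k) ltac:(lia)).
    specialize (Ho k Hk). destruct (Hm (b k) (a (S k))); lra.
  - eapply Rle_lt_trans; [|apply Hs]. apply sum_Rle. intros k Hk. destruct (Hab k Hk).
    destruct (Hm (a k) (b k)); lra.
Qed.

Lemma ac_on_continuity_pt lo hi f t : ac_on lo hi f -> lo < t < hi -> continuity_pt f t.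
Proof.
  intros Hf Ht. unfold continuity_pt, continue_in, limit1_in, limit_in. simpl. unfold R_dist.
  intros eps Heps. destruct (Hf eps Heps) as (d & Hd & H).
  set (r := Rmin d (Rmin (t - lo) (hi - t))).
  assert (Hr : r <= d /\ r <= t - lo /\ r <= hi - t).
  { unfold r. pose proof (Rmin_l d (Rmin (t - lo) (hi - t))).
    pose proof (Rmin_r d (Rmin (t - lo) (hi - t))).
    pose proof (Rmin_l (t - lo) (hi - t)). pose proof (Rmin_r (t - lo) (hi - t)). lra. }
  exists r. split; [apply Rmin_pos; auto; apply Rmin_pos; lra|].
  intros x [_ Hx]. apply Rabs_def2 in Hx.
  destruct (Rle_dec t x).
  - apply (H O (fun _ => t) (fun _ => x)); [intros k _; lra|intros k Hk; lia|simpl; lra].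
  - rewrite Rabs_minus_sym.
    apply (H O (fun _ => x) (fun _ => t)); [intros k _; lra|intros k Hk; lia|simpl; lra].
Qed.

Lemma sum_f_R0_mono h n m : (forall i, 0 <= h i) -> (n <= m)%nat ->
  sum_f_R0 h n <= sum_f_R0 h m.
Proof.
  intros H Hnm. induction Hnm as [|m _ IH]; [lra|].
  rewrite tech5. specialize (H (S m)). lra.
Qed.

Definition interleave (h1 h2 : nat -> R) (n : nat) : R :=
  if Nat.even n then h1 (Nat.div2 n) else h2 (Nat.div2 n).

Lemma interleave_even h1 h2 n : interleave h1 h2 (2 * n) = h1 n.
Proof. unfold interleave. rewrite Nat.even_even, Nat.div2_double. reflexivity. Qed.

Lemma interleave_odd h1 h2 n : interleave h1 h2 (S (2 * n)) = h2 n.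
Proof.
  unfold interleave. rewrite Nat.even_succ, <- Nat.negb_even, Nat.even_even, Nat.div2_succ_double.
  reflexivity.
Qed.

Lemma sum_interleave h1 h2 m :
  sum_f_R0 (interleave h1 h2) (S (2 * m)) = sum_f_R0 h1 m + sum_f_R0 h2 m.
Proof.
  induction m as [|m IH].
  - unfold interleave. simpl. reflexivity.
  - replace (S (2 * S m)) with (S (S (S (2 * m)))) by lia.
    rewrite tech5, tech5, IH.
    replace (S (S (2 * m))) with (2 * S m)%nat by lia.
    rewrite interleave_even, interleave_odd, !tech5. ring.
Qed.

Lemma negligible_union N1 N2 : negligible N1 -> negligible N2 ->
  negligible (fun t => N1 t \/ N2 t).
Proof.
  intros H1 H2 eps Heps.
  destruct (H1 (eps / 2) ltac:(lra)) as (a1 & b1 & Hab1 & Hc1 & Hs1).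
  destruct (H2 (eps / 2) ltac:(lra)) as (a2 & b2 & Hab2 & Hc2 & Hs2).
  assert (Hlen : forall i, interleave b1 b2 i - interleave a1 a2 i =
                           interleave (fun k => b1 k - a1 k) (fun k => b2 k - a2 k) i).
  { intros i. unfold interleave. destruct (Nat.even i); reflexivity. }
  exists (interleave a1 a2), (interleave b1 b2). split; [|split].
  - intros n. unfold interleave. destruct (Nat.even n); auto.
  - intros t [Ht|Ht].
    + destruct (Hc1 t Ht) as [n Hn]. exists (2 * n)%nat. rewrite !interleave_even. auto.
    + destruct (Hc2 t Ht) as [n Hn]. exists (S (2 * n)). rewrite !interleave_odd. auto.
  - intros n. rewrite (sum_eq _ _ n (fun i _ => Hlen i)).
    apply Rle_trans with (sum_f_R0 (interleave (fun k => b1 k - a1 k) (fun k => b2 k - a2 k))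
                            (S (2 * n))).
    + apply sum_f_R0_mono; [|lia]. intros i. unfold interleave.
      destruct (Nat.even i); [specialize (Hab1 (Nat.div2 i))|specialize (Hab2 (Nat.div2 i))]; lra.
    + rewrite sum_interleave. specialize (Hs1 n). specialize (Hs2 n). lra.
Qed.

Lemma negligible_shift N D : negligible N -> negligible (fun t => N (t + D)).
Proof.
  intros H eps Heps. destruct (H eps Heps) as (a & b & Hab & Hc & Hs).
  exists (fun n => a n - D), (fun n => b n - D). split; [|split].
  - intros n; specialize (Hab n); lra.
  - intros t Ht. destruct (Hc _ Ht) as [n Hn]. exists n; lra.
  - intros n. rewrite (sum_eq _ (fun k => b k - a k)) by (intros; ring). auto.
Qed.

Lemma negligible_point p : negligible (fun t => t = p).
Proof.
  intros eps Heps.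
  exists (fun n => match n with O => p - eps / 4 | _ => 0 end),
         (fun n => match n with O => p + eps / 4 | _ => 0 end).
  split; [|split].
  - intros [|n]; lra.
  - intros t ->. exists O. lra.
  - intros n. induction n as [|n IH]; [simpl; lra|]. rewrite tech5. simpl. lra.
Qed.

Lemma ac_on_ae_derivative lo hi f v N : lo <= hi -> ac_on lo hi f -> negligible N ->
  (forall t, lo < t < hi -> ~ N t -> derivable_pt_lim f t v) ->
  f hi - f lo = v * (hi - lo).
Proof.
  intros Hlh Hac HN Hd.
  set (g := fun t => f t + (- v * t + 0)).
  assert (Hg : g hi = g lo).
  { apply ac_on_null_derivative_const; auto.
    - apply ac_on_plus; [auto|apply ac_on_affine].
    - intros eps Heps.
      assert (HN' : negligible (fun t => N t \/ (t = lo \/ t = hi))).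
      { apply negligible_union; [|apply negligible_union]; auto using negligible_point. }
      destruct (HN' eps Heps) as (a & b & Hab & Hcov & Hs).
      exists a, b. repeat split; auto.
      intros t Ht. destruct (classic (N t \/ (t = lo \/ t = hi))) as [Hin|Hout].
      + left. apply Hcov, Hin.
      + right. replace 0 with (v + (- v * 1 + 0)) by ring.
        apply derivable_pt_lim_plus.
        * apply Hd; [lra|tauto].
        * apply derivable_pt_lim_plus; [|apply derivable_pt_lim_const].
          apply derivable_pt_lim_scal, derivable_pt_lim_id. }
  unfold g in Hg. lra.
Qed.

Lemma borel_shift S D : borel S -> borel (fun t => S (t + D)).
Proof.
  induction 1 as [a b|A _ IH|F _ IH|A B HAB _ IH].
  - apply (borel_ext (fun t => a - D < t < b - D)); [intros t; lra|apply borel_interval].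
  - apply borel_compl; auto.
  - apply borel_union; auto.
  - apply (borel_ext (fun t => A (t + D))); auto.
Qed.

Lemma borel_or A B : borel A -> borel B -> borel (fun t => A t \/ B t).
Proof.
  intros HA HB.
  apply (borel_ext (fun t => exists n : nat, (match n with O => A | _ => B end) t)).
  - intros t; split; [intros [[|n] H]; auto|].
    intros [H|H]; [exists O|exists 1%nat]; auto.
  - apply borel_union. intros [|n]; auto.
Qed.

Lemma borel_and A B : borel A -> borel B -> borel (fun t => A t /\ B t).
Proof.
  intros HA HB. apply (borel_ext (fun t => ~ ((~ A t) \/ (~ B t)))).
  - intros t. tauto.
  - apply borel_compl, borel_or; apply borel_compl; auto.
Qed.

Lemma borel_const (P : Prop) : borel (fun _ => P).
Proof.
  destruct (classic P) as [HP|HP].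
  - apply (borel_ext (fun t => ~ (0 < t < 0))); [intros; split; auto; lra|].
    apply borel_compl, borel_interval.
  - apply (borel_ext (fun t => 0 < t < 0)); [intros; split; [lra|tauto]|apply borel_interval].
Qed.

Lemma borel_le c : borel (fun t => t <= c).
Proof.
  apply (borel_ext (fun t => ~ exists n : nat, c < t < c + INR n)).
  - intros t; split.
    + intros Hn. apply Rnot_lt_le. intros Hlt. apply Hn.
      destruct (archimed (t - c)) as [H1 _]. exists (Z.to_nat (up (t - c))).
      rewrite INR_IZR_INZ, Z2Nat.id; [lra|]. apply le_IZR. simpl. lra.
    + intros Ht [n Hn]. lra.
  - apply borel_compl, borel_union. intros n; apply borel_interval.
Qed.

Lemma derivable_pt_lim_open_ext f g l r t v : l < t < r ->
  (forall s, l < s < r -> f s = g s) -> derivable_pt_lim g t v -> derivable_pt_lim f t v.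
Proof.
  intros Ht E H eps Heps. destruct (H eps Heps) as (d & Hd).
  assert (Hm : 0 < Rmin d (Rmin (t - l) (r - t))).
  { apply Rmin_pos; [apply cond_pos|apply Rmin_pos; lra]. }
  exists (mkposreal _ Hm). intros h Hh Hlt. simpl in Hlt.
  pose proof (Rmin_l d (Rmin (t - l) (r - t))); pose proof (Rmin_r d (Rmin (t - l) (r - t))).
  pose proof (Rmin_l (t - l) (r - t)); pose proof (Rmin_r (t - l) (r - t)).
  apply Rabs_def2 in Hlt as Hh'.
  rewrite !E by lra. apply Hd; auto; lra.
Qed.

Lemma derivable_pt_lim_shift f t D v :
  derivable_pt_lim f (t + D) v -> derivable_pt_lim (fun s => f (s + D)) t v.
Proof.
  intros H eps Heps. destruct (H eps Heps) as (d & Hd). exists d. intros h Hh Hlt.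
  replace (t + h + D) with (t + D + h) by ring. apply Hd; auto.
Qed.

(* Solution of x' = u1 + u2, y' = (u1 - u2) x starting from p, under the constant control al. *)
Definition bang_x (al p : R * R) (s : R) : R := fst p + (fst al + snd al) * s.
Definition bang_y (al p : R * R) (s : R) : R :=
  snd p + (fst al - snd al) * (fst p * s + (fst al + snd al) * (s * s) / 2).
Definition bang (al : R * R) (s : R) (p : R * R) : R * R := (bang_x al p s, bang_y al p s).

Lemma derivable_bang_x al p t :
  derivable_pt_lim (fun s => bang_x al p s) t (fst al * 1 + snd al * 1).
Proof. apply is_derive_Reals. unfold bang_x. auto_derive; [auto|ring]. Qed.

Lemma derivable_bang_y al p t :
  derivable_pt_lim (fun s => bang_y al p s) t (fst al * bang_x al p t + snd al * - bang_x al p t).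
Proof. apply is_derive_Reals. unfold bang_y, bang_x. auto_derive; [auto|field]. Qed.

Lemma ac_on_quadratic k0 k1 k2 M : 0 <= M -> ac_on 0 M (fun s => k0 + k1 * s + k2 * (s * s)).
Proof.
  intros HM. apply (ac_on_lipschitz _ _ _ (Rabs k1 + 2 * Rabs k2 * M)).
  { pose proof (Rabs_pos k1); pose proof (Rabs_pos k2); nra. }
  intros s t Hs Ht.
  replace (k0 + k1 * t + k2 * (t * t) - (k0 + k1 * s + k2 * (s * s)))
    with ((k1 + k2 * (t + s)) * (t - s)) by ring.
  rewrite Rabs_mult. apply Rmult_le_compat_r; [apply Rabs_pos|].
  eapply Rle_trans; [apply Rabs_triang|]. rewrite Rabs_mult.
  assert (Rabs (t + s) <= 2 * M) by (rewrite Rabs_right; lra).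
  pose proof (Rabs_pos k2). nra.
Qed.

Lemma ac_on_bang_x al p M : 0 <= M -> ac_on 0 M (fun s => bang_x al p s).
Proof.
  intros HM. refine (ac_on_ext _ _ _ _ _ (ac_on_quadratic (fst p) (fst al + snd al) 0 M HM)).
  intros s. unfold bang_x. ring.
Qed.

Lemma ac_on_bang_y al p M : 0 <= M -> ac_on 0 M (fun s => bang_y al p s).
Proof.
  intros HM. refine (ac_on_ext _ _ _ _ _ (ac_on_quadratic (snd p) ((fst al - snd al) * fst p)
    ((fst al - snd al) * (fst al + snd al) / 2) M HM)).
  intros s. unfold bang_y. field.
Qed.

Definition clamp (A t : R) : R := Rmin (Rmax t 0) A.

Lemma clamp_id A t : 0 <= t <= A -> clamp A t = t.
Proof. intros H. unfold clamp, Rmin, Rmax. destruct (Rle_dec t 0); destruct (Rle_dec _ A); lra. Qed.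

Lemma clamp_lo A t : 0 <= A -> t <= 0 -> clamp A t = 0.
Proof. intros H H'. unfold clamp, Rmin, Rmax. destruct (Rle_dec t 0); destruct (Rle_dec _ A); lra. Qed.

Lemma clamp_hi A t : 0 <= A -> A <= t -> clamp A t = A.
Proof. intros H H'. unfold clamp, Rmin, Rmax. destruct (Rle_dec t 0); destruct (Rle_dec _ A); lra. Qed.

Lemma ac_on_clamp_comp f A C lo hi : 0 <= A -> ac_on 0 A f ->
  ac_on lo hi (fun t => f (clamp A (t - C))).
Proof.
  intros HA Hf. apply (ac_on_comp 0 A lo hi f (fun t => clamp A (t - C))); auto.
  - intros s t _ Hst _. unfold clamp, Rmin, Rmax.
    destruct (Rle_dec (s - C) 0), (Rle_dec (t - C) 0);
      repeat match goal with |- context [Rle_dec ?x A] => destruct (Rle_dec x A) end; lra.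
  - intros t _. unfold clamp, Rmin, Rmax.
    destruct (Rle_dec (t - C) 0);
      repeat match goal with |- context [Rle_dec ?x A] => destruct (Rle_dec x A) end; lra.
Qed.

Definition control_bounded (w : R * R) : Prop := Rabs (fst w) <= 1 /\ Rabs (snd w) <= 1.

Definition two_bang_reachable (p q : R * R) (tau : R) : Prop :=
  exists A B al be, 0 <= A /\ 0 <= B /\ A + B < tau /\ control_bounded al /\
    control_bounded be /\ bang be B (bang al A p) = q.

Definition solves_at (g : R -> R * R) (w : R * R) (t : R) : Prop :=
  derivable_pt_lim (fun s => fst (g s)) t (fst w * 1 + snd w * 1) /\
  derivable_pt_lim (fun s => snd (g s)) t (fst w * fst (g t) + snd w * - fst (g t)).

Lemma solves_at_open_ext g h w l r t : l < t < r ->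
  (forall s, l < s < r -> g s = h s) -> solves_at h w t -> solves_at g w t.
Proof.
  intros Ht E [Hx Hy]. split.
  - apply (derivable_pt_lim_open_ext _ _ l r t _ Ht (fun s Hs => f_equal fst (E s Hs)) Hx).
  - rewrite (E t Ht).
    apply (derivable_pt_lim_open_ext _ _ l r t _ Ht (fun s Hs => f_equal snd (E s Hs)) Hy).
Qed.

Lemma solves_at_shift g w D t : solves_at g w (t + D) -> solves_at (fun s => g (s + D)) w t.
Proof. intros [Hx Hy]. split; apply (derivable_pt_lim_shift (fun s => _ (g s))); auto. Qed.

Lemma solves_at_bang al p C t : solves_at (fun s => bang al (s - C) p) al t.
Proof.
  apply (solves_at_shift (fun s => bang al s p) al (- C) t). simpl.
  split; [apply derivable_bang_x|apply derivable_bang_y].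
Qed.

Lemma admissible_elim T g u : admissible T g u ->
  0 <= T /\ measurable_fun (fun t => fst (u t)) /\ measurable_fun (fun t => snd (u t)) /\
  (exists N, negligible N /\ forall t, 0 < t < T -> ~ N t ->
     Rabs (fst (u t)) <= 1 /\ Rabs (snd (u t)) <= 1) /\
  ac_on 0 T (fun t => fst (g t)) /\ ac_on 0 T (fun t => snd (g t)) /\
  (exists N, negligible N /\ forall t, 0 < t < T -> ~ N t -> solves_at g (u t) t).
Proof. intros (H1 & H2 & H3 & H4 & [H5 H6] & H7). repeat split; auto. Qed.

Section Shortcut.
Variables (t4 A B : R) (gamma u : R -> R * R) (al be : R * R).
Hypotheses (HA : 0 <= A) (HB : 0 <= B) (HAB : A + B < t4)
  (Hend : bang be B (bang al A (gamma 0)) = gamma t4).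

Let p1 := bang al A (gamma 0).
Let D := t4 - (A + B).

(* Follow al during time A, then be during time B, then gamma from t4 on.  Each phase is
   frozen by a clamp outside its time window, so that every coordinate is a sum of three
   absolutely continuous terms. *)
Definition shortcut_x (t : R) : R :=
  bang_x al (gamma 0) (clamp A t) + (bang_x be p1 (clamp B (t - A)) - fst p1)
  + (fst (gamma (Rmax t (A + B) + D)) - fst (gamma t4)).
Definition shortcut_y (t : R) : R :=
  bang_y al (gamma 0) (clamp A t) + (bang_y be p1 (clamp B (t - A)) - snd p1)
  + (snd (gamma (Rmax t (A + B) + D)) - snd (gamma t4)).
Definition shortcut (t : R) : R * R := (shortcut_x t, shortcut_y t).

Definition shortcut_control (t : R) : R * R :=
  if Rle_dec t A then al else if Rle_dec t (A + B) then be else u (t + D).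

Lemma tail_before s : s <= A + B -> Rmax s (A + B) + D = t4.
Proof. intros Hs. unfold Rmax, D. destruct (Rle_dec s (A + B)); lra. Qed.

Lemma tail_after s : A + B <= s -> Rmax s (A + B) + D = s + D.
Proof. intros Hs. unfold Rmax. destruct (Rle_dec s (A + B)); [replace s with (A + B)|]; lra. Qed.

Lemma shortcut_phase1 s : 0 <= s <= A -> shortcut s = bang al s (gamma 0).
Proof.
  intros Hs. unfold shortcut, shortcut_x, shortcut_y, bang.
  rewrite clamp_id, (clamp_lo B), tail_before by lra.
  f_equal; unfold bang_x, bang_y; field.
Qed.

Lemma shortcut_phase2 s : A <= s <= A + B -> shortcut s = bang be (s - A) p1.
Proof.
  intros Hs. unfold shortcut, shortcut_x, shortcut_y, bang.
  rewrite (clamp_hi A), (clamp_id B), tail_before by lra.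
  f_equal; unfold p1, bang; simpl; ring.
Qed.

Lemma shortcut_phase3 s : A + B <= s -> shortcut s = gamma (s + D).
Proof.
  intros Hs. unfold shortcut, shortcut_x, shortcut_y.
  rewrite (clamp_hi A), (clamp_hi B), tail_after by lra.
  rewrite <- Hend. destruct (gamma (s + D)) as [x y]. simpl.
  f_equal; unfold p1, bang; simpl; ring.
Qed.

Lemma shortcut_control_measurable (f : R * R -> R) :
  measurable_fun (fun t => f (u t)) -> measurable_fun (fun t => f (shortcut_control t)).
Proof.
  intros Hf r.
  apply (borel_ext (fun t => (t <= A /\ f al < r) \/ ((~ t <= A) /\
    ((t <= A + B /\ f be < r) \/ ((~ t <= A + B) /\ f (u (t + D)) < r))))).
  - intros t. unfold shortcut_control. destruct (Rle_dec t A), (Rle_dec t (A + B)); tauto.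
  - repeat first [apply borel_le | apply borel_const | apply borel_or | apply borel_and
                 | apply borel_compl].
    apply (borel_shift (fun t => f (u t) < r)), Hf.
Qed.

Lemma ac_on_shortcut T (g : R * R -> R) :
  t4 <= T -> ac_on 0 T (fun t => g (gamma t)) ->
  ac_on 0 A (fun s => g (bang al s (gamma 0))) -> ac_on 0 B (fun s => g (bang be s p1)) ->
  (forall t, g (shortcut t) = g (bang al (clamp A t) (gamma 0))
                             + (g (bang be (clamp B (t - A)) p1) - g p1)
                             + (g (gamma (Rmax t (A + B) + D)) - g (gamma t4))) ->
  ac_on 0 (T - D) (fun t => g (shortcut t)).
Proof.
  intros Ht4 Hg H1 H2 E. refine (ac_on_ext _ _ _ _ (fun t => eq_sym (E t)) _).
  apply ac_on_plus; [apply ac_on_plus|apply ac_on_plus; [|apply ac_on_const]].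
  - refine (ac_on_ext _ _ _ _ (fun t => f_equal (fun z => g (bang al (clamp A z) (gamma 0)))
      (Rminus_0_r t)) _).
    apply (ac_on_clamp_comp (fun s => g (bang al s (gamma 0)))); auto.
  - apply ac_on_plus; [|apply ac_on_const].
    apply (ac_on_clamp_comp (fun s => g (bang be s p1))); auto.
  - apply (ac_on_comp 0 T 0 (T - D) _ (fun t => Rmax t (A + B) + D) Hg).
    + intros s t _ Hst _. unfold Rmax. destruct (Rle_dec s (A + B)), (Rle_dec t (A + B)); lra.
    + intros t Ht. unfold Rmax, D in *. destruct (Rle_dec t (A + B)); lra.
Qed.

Lemma shortcut_solves_at t : 0 < t -> t <> A -> t <> A + B ->
  (A + B < t -> solves_at gamma (u (t + D)) (t + D)) ->
  solves_at shortcut (shortcut_control t) t.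
Proof.
  intros Ht HtA HtB Hg. unfold shortcut_control.
  destruct (Rle_dec t A) as [HtA'|HtA']; [|destruct (Rle_dec t (A + B)) as [HtB'|HtB']].
  - apply (solves_at_open_ext _ (fun s => bang al (s - 0) (gamma 0)) _ 0 A);
      [lra| |apply solves_at_bang].
    intros s Hs. rewrite Rminus_0_r. apply shortcut_phase1. lra.
  - apply (solves_at_open_ext _ (fun s => bang be (s - A) p1) _ A (A + B));
      [lra| |apply solves_at_bang].
    intros s Hs. apply shortcut_phase2. lra.
  - apply (solves_at_open_ext _ (fun s => gamma (s + D)) _ (A + B) (t + 1)); [lra| |].
    + intros s Hs. apply shortcut_phase3. lra.
    + apply solves_at_shift, Hg. lra.
Qed.

Lemma shortcut_admissible T : admissible T gamma u -> t4 <= T ->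
  control_bounded al -> control_bounded be ->
  admissible (T - D) shortcut shortcut_control.
Proof.
  intros Hadm Ht4 Hal Hbe.
  destruct (admissible_elim _ _ _ Hadm)
    as (HT & Hm1 & Hm2 & (Nu & HNu & Hu) & Hacx & Hacy & (Nd & HNd & Hd)).
  assert (HD : 0 < D) by (unfold D; lra).
  split; [unfold D; lra|].
  split; [apply (shortcut_control_measurable fst Hm1)|].
  split; [apply (shortcut_control_measurable snd Hm2)|].
  split.
  { exists (fun t => Nu (t + D)). split; [apply negligible_shift; auto|].
    intros t Ht HN. unfold shortcut_control.
    destruct (Rle_dec t A); [apply Hal|]. destruct (Rle_dec t (A + B)); [apply Hbe|].
    apply Hu; auto. lra. }
  split; [split|].
  - apply (ac_on_shortcut T fst); auto; try (intros; reflexivity).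
    + apply (ac_on_bang_x al (gamma 0) A HA).
    + apply (ac_on_bang_x be p1 B HB).
  - apply (ac_on_shortcut T snd); auto; try (intros; reflexivity).
    + apply (ac_on_bang_y al (gamma 0) A HA).
    + apply (ac_on_bang_y be p1 B HB).
  - exists (fun t => Nd (t + D) \/ (t = A \/ t = A + B)). split.
    { apply negligible_union; [apply negligible_shift; auto|].
      apply negligible_union; apply negligible_point. }
    intros t Ht HN. apply shortcut_solves_at; try lra; try tauto.
    intros _. apply Hd; [lra|tauto].
Qed.

End Shortcut.

Lemma bang_0 al p : bang al 0 p = p.
Proof. destruct p as [x y]. unfold bang, bang_x, bang_y. simpl. f_equal; field. Qed.

Lemma two_bang_shortcut T gamma u t4 : admissible T gamma u -> t4 <= T ->
  two_bang_reachable (gamma 0) (gamma t4) t4 -> ~ time_minimizer T gamma.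
Proof.
  intros Hadm Ht4 (A & B & al & be & HA & HB & HAB & Hal & Hbe & Hend) [_ Hmin].
  apply (Hmin _ _ _ (shortcut_admissible t4 A B gamma u al be HA HB HAB Hend T Hadm Ht4 Hal Hbe)).
  - rewrite shortcut_phase1 by lra. apply bang_0.
  - rewrite shortcut_phase3 by (auto; lra). f_equal. ring.
  - lra.
Qed.

Lemma continuous_nonvanishing_same_sign f a b :
  (forall t, a < t < b -> continuity_pt f t) -> (forall t, a < t < b -> f t <> 0) ->
  forall s t, a < s < b -> a < t < b -> 0 < f s * f t.
Proof.
  intros Hc Hnz.
  assert (Hord : forall s t, a < s < b -> a < t < b -> s < t -> 0 < f s * f t).
  { intros s t Hs Ht Hst. pose proof (Hnz s Hs); pose proof (Hnz t Ht).
    destruct (Rlt_dec 0 (f s * f t)) as [|Hneg]; auto. exfalso.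
    assert (Hcst : forall z, s <= z <= t -> continuity_pt f z) by (intros; apply Hc; lra).
    destruct (Rlt_dec (f s) 0).
    - destruct (Ranalysis5.IVT_interv f s t Hcst Hst) as (z & Hz & Ez); [auto|nra|].
      apply (Hnz z); [lra|auto].
    - destruct (Ranalysis5.IVT_interv (fun z => - f z) s t) as (z & Hz & Ez); try nra.
      + intros z Hz. apply continuity_pt_opp, Hcst, Hz.
      + apply (Hnz z); [lra|lra]. }
  intros s t Hs Ht. destruct (Rtotal_order s t) as [Hst|[->|Hst]].
  - auto.
  - pose proof (Hnz t Ht). nra.
  - rewrite Rmult_comm. auto.
Qed.

Lemma affine_pos_open_left al be d : 0 < d ->
  (forall tau, 0 < tau < d -> 0 < al + be * tau) -> 0 <= al.
Proof.
  intros Hd H. destruct (Rle_dec 0 al) as [|Hal]; auto. exfalso.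
  set (tau := Rmin (d / 2) (- al / (2 * (Rabs be + 1)))).
  assert (Hb : 0 < Rabs be + 1) by (pose proof (Rabs_pos be); lra).
  assert (Ht : 0 < tau) by (apply Rmin_pos; [lra|]; apply Rdiv_lt_0_compat; lra).
  assert (Ht2 : tau <= - al / (2 * (Rabs be + 1))) by apply Rmin_r.
  assert (Ht3 : tau <= d / 2) by apply Rmin_l.
  specialize (H tau ltac:(lra)).
  assert (be * tau <= Rabs be * tau) by (apply Rmult_le_compat_r; [lra|apply Rle_abs]).
  assert ((Rabs be + 1) * tau <= - al / 2).
  { apply Rmult_le_compat_l with (r := Rabs be + 1) in Ht2; [|lra].
    replace ((Rabs be + 1) * (- al / (2 * (Rabs be + 1)))) with (- al / 2) in Ht2
      by (field; lra). auto. }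
  lra.
Qed.

Lemma affine_pos_open_right al be d : 0 < d ->
  (forall tau, 0 < tau < d -> 0 < al + be * tau) -> 0 <= al + be * d.
Proof.
  intros Hd H. apply (affine_pos_open_left (al + be * d) (- be) d Hd). intros tau Ht.
  replace (al + be * d + - be * tau) with (al + be * (d - tau)) by ring. apply H; lra.
Qed.

Definition sign (s : R) : Prop := s = 1 \/ s = -1.

Lemma sign_opp s : sign s -> sign (- s).
Proof. intros [-> | ->]; [right|left]; ring. Qed.

Lemma sign_abs_le s : sign s -> Rabs s <= 1.
Proof. intros [-> | ->]; unfold Rabs; destruct Rcase_abs; lra. Qed.

Lemma max_control_sign u1 u2 p1 p2 s1 s2 : Rabs u1 <= 1 -> Rabs u2 <= 1 -> sign s1 -> sign s2 ->
  0 < s1 * p1 -> 0 < s2 * p2 -> u1 * p1 + u2 * p2 = Rabs p1 + Rabs p2 -> u1 = s1 /\ u2 = s2.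
Proof.
  intros H1 H2 Hs1 Hs2 Hp1 Hp2 E. apply Rabs_le_between in H1. apply Rabs_le_between in H2.
  revert E. unfold Rabs.
  destruct (Rcase_abs p1), (Rcase_abs p2); destruct Hs1, Hs2; subst; intros; split; nra.
Qed.

(* Switching values (q1, q2) and (p1, p2) at the two ends of an arc with control (s1, s2),
   along which phi1 and phi2 are affine with increments [2 s2 e] and [- 2 s1 e]. *)
Definition switching_arc (q1 q2 p1 p2 e s1 s2 : R) : Prop :=
  sign s1 /\ sign s2 /\ p1 = q1 + 2 * s2 * e /\ p2 = q2 - 2 * s1 * e /\
  0 <= s1 * q1 /\ 0 <= s1 * p1 /\ 0 < s1 * (q1 + p1) /\
  0 <= s2 * q2 /\ 0 <= s2 * p2 /\ 0 < s2 * (q2 + p2).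

Definition bang_arc (lam gamma : R -> R * R) (c a b s1 s2 : R) : Prop :=
  switching_arc (phi1 lam gamma a) (phi2 lam gamma a) (phi1 lam gamma b) (phi2 lam gamma b)
    (c * (b - a)) s1 s2 /\
  gamma b = bang (s1, s2) (b - a) (gamma a).

Section RegularArc.
Variables (T c : R) (gamma lam u : R -> R * R) (N : R -> Prop).
Hypotheses (Hacx : ac_on 0 T (fun t => fst (gamma t)))
  (Hacy : ac_on 0 T (fun t => snd (gamma t)))
  (Hacl : ac_on 0 T (fun t => fst (lam t)))
  (HN : negligible N)
  (Hbd : forall t, 0 < t < T -> ~ N t -> Rabs (fst (u t)) <= 1 /\ Rabs (snd (u t)) <= 1)
  (Hode : forall t, 0 < t < T -> ~ N t -> solves_at gamma (u t) t)
  (Hdl : forall t, 0 < t < T -> ~ N t ->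
    derivable_pt_lim (fun s => fst (lam s)) t (- (fst (u t) - snd (u t)) * c))
  (Hl2 : forall t, 0 <= t <= T -> snd (lam t) = c)
  (Hmax : forall t, 0 < t < T -> ~ N t ->
    fst (u t) * phi1 lam gamma t + snd (u t) * phi2 lam gamma t =
    Rabs (phi1 lam gamma t) + Rabs (phi2 lam gamma t)).

Lemma phi_eqs t : 0 <= t <= T ->
  phi1 lam gamma t = fst (lam t) + c * fst (gamma t) /\
  phi2 lam gamma t = fst (lam t) - c * fst (gamma t).
Proof. intros Ht. unfold phi1, phi2, pairing, Y1, Y2. simpl. rewrite Hl2 by auto. lra. Qed.

Lemma phi_continuity_pt t : 0 < t < T ->
  continuity_pt (phi1 lam gamma) t /\ continuity_pt (phi2 lam gamma) t.
Proof.
  intros Ht.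
  assert (Cl := ac_on_continuity_pt _ _ _ t Hacl Ht).
  assert (Cx := ac_on_continuity_pt _ _ _ t Hacx Ht).
  assert (Ec : forall z, Rabs (z - t) < Rmin t (T - t) -> 0 <= z <= T).
  { intros z Hz. apply Rabs_def2 in Hz.
    pose proof (Rmin_l t (T - t)); pose proof (Rmin_r t (T - t)). lra. }
  assert (Hpos : 0 < Rmin t (T - t)) by (apply Rmin_pos; lra).
  split; [apply (continuity_pt_locally_ext (fun z => fst (lam z) + c * fst (gamma z)) _ _ t Hpos)
         |apply (continuity_pt_locally_ext (fun z => fst (lam z) - c * fst (gamma z)) _ _ t Hpos)];
    try (intros z Hz; symmetry; apply phi_eqs, Ec, Hz).
  - apply continuity_pt_plus; auto. apply continuity_pt_scal; auto.
  - apply continuity_pt_minus; auto. apply continuity_pt_scal; auto.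
Qed.

Lemma regular_arc_signs a b : 0 <= a -> a < b -> b <= T -> regular_on lam gamma a b ->
  exists s1 s2, sign s1 /\ sign s2 /\
    forall t, a < t < b -> 0 < s1 * phi1 lam gamma t /\ 0 < s2 * phi2 lam gamma t.
Proof.
  intros Ha Hab Hb Hreg.
  assert (Hsign : forall f, (forall t, a < t < b -> continuity_pt f t) ->
                            (forall t, a < t < b -> f t <> 0) ->
                            exists s, sign s /\ forall t, a < t < b -> 0 < s * f t).
  { intros f Hc Hnz. set (m := (a + b) / 2). assert (Hm : a < m < b) by (unfold m; lra).
    pose proof (continuous_nonvanishing_same_sign f a b Hc Hnz m) as Hsame.
    destruct (Rlt_dec 0 (f m)).
    - exists 1. split; [left; auto|]. intros t Ht. specialize (Hsame t Hm Ht). nra.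
    - exists (-1). split; [right; auto|]. intros t Ht. specialize (Hsame t Hm Ht).
      pose proof (Hnz m Hm). nra. }
  destruct (Hsign (phi1 lam gamma)) as (s1 & Hs1 & H1).
  { intros t Ht. apply phi_continuity_pt. lra. }
  { intros t Ht. apply Hreg, Ht. }
  destruct (Hsign (phi2 lam gamma)) as (s2 & Hs2 & H2).
  { intros t Ht. apply phi_continuity_pt. lra. }
  { intros t Ht. apply Hreg, Ht. }
  exists s1, s2. auto.
Qed.

Section Arc.
Variables (a b s1 s2 : R).
Hypotheses (Ha : 0 <= a) (Hab : a < b) (Hb : b <= T) (Hs1 : sign s1) (Hs2 : sign s2)
  (Hpos : forall t, a < t < b -> 0 < s1 * phi1 lam gamma t /\ 0 < s2 * phi2 lam gamma t).

Lemma regular_arc_control t : a < t < b -> ~ N t -> fst (u t) = s1 /\ snd (u t) = s2.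
Proof.
  intros Ht HNt. assert (Ht' : 0 < t < T) by lra. destruct (Hbd t Ht' HNt).
  destruct (Hpos t Ht). eapply max_control_sign; eauto.
Qed.

Lemma regular_arc_x t : a <= t <= b -> fst (gamma t) = fst (gamma a) + (s1 + s2) * (t - a).
Proof.
  intros Ht. enough (fst (gamma t) - fst (gamma a) = (s1 + s2) * (t - a)) by lra.
  apply (ac_on_ae_derivative a t (fun s => fst (gamma s)) (s1 + s2) N); [lra| |auto|].
  - apply (ac_on_sub 0 T); auto; lra.
  - intros tau Htau HNt. destruct (regular_arc_control tau ltac:(lra) HNt) as [E1 E2].
    destruct (Hode tau ltac:(lra) HNt) as [D1 _]. rewrite E1, E2 in D1.
    replace (s1 + s2) with (s1 * 1 + s2 * 1) by ring. auto.
Qed.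

Lemma regular_arc_y : snd (gamma b) = snd (gamma a) + (s1 - s2) * fst (gamma a) * (b - a).
Proof.
  enough (snd (gamma b) - snd (gamma a) = (s1 - s2) * fst (gamma a) * (b - a)) by lra.
  apply (ac_on_ae_derivative a b (fun s => snd (gamma s)) ((s1 - s2) * fst (gamma a)) N);
    [lra| |auto|].
  - apply (ac_on_sub 0 T); auto; lra.
  - intros tau Htau HNt. destruct (regular_arc_control tau ltac:(lra) HNt) as [E1 E2].
    destruct (Hode tau ltac:(lra) HNt) as [_ D2].
    rewrite E1, E2, (regular_arc_x tau) in D2 by lra.
    (* (s1 - s2) (s1 + s2) = 0: the y-velocity is frozen along the arc *)
    replace ((s1 - s2) * fst (gamma a)) with
      (s1 * (fst (gamma a) + (s1 + s2) * (tau - a)) + s2 * - (fst (gamma a) + (s1 + s2) * (tau - a)));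
      auto.
    destruct Hs1 as [-> | ->], Hs2 as [-> | ->]; ring.
Qed.

Lemma regular_arc_phi t : a <= t <= b ->
  phi1 lam gamma t = phi1 lam gamma a + 2 * s2 * (c * (t - a)) /\
  phi2 lam gamma t = phi2 lam gamma a - 2 * s1 * (c * (t - a)).
Proof.
  intros Ht.
  assert (Hl : fst (lam t) - fst (lam a) = - (s1 - s2) * c * (t - a)).
  { apply (ac_on_ae_derivative a t (fun s => fst (lam s)) (- (s1 - s2) * c) N); [lra| |auto|].
    - apply (ac_on_sub 0 T); auto; lra.
    - intros tau Htau HNt. destruct (regular_arc_control tau ltac:(lra) HNt) as [E1 E2].
      pose proof (Hdl tau ltac:(lra) HNt) as D. rewrite E1, E2 in D. auto. }
  destruct (phi_eqs t) as [Et1 Et2]; [lra|]. destruct (phi_eqs a) as [Ea1 Ea2]; [lra|].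
  rewrite Et1, Et2, Ea1, Ea2, (regular_arc_x t Ht). split; nra.
Qed.

Lemma regular_arc_bang_arc : bang_arc lam gamma c a b s1 s2.
Proof.
  set (q1 := phi1 lam gamma a). set (q2 := phi2 lam gamma a).
  assert (L1 : forall tau, 0 < tau < b - a -> 0 < s1 * q1 + (s1 * 2 * s2 * c) * tau).
  { intros tau Ht. destruct (Hpos (a + tau) ltac:(lra)) as [H _].
    rewrite (proj1 (regular_arc_phi (a + tau) ltac:(lra))) in H.
    replace (a + tau - a) with tau in H by ring. unfold q1. nra. }
  assert (L2 : forall tau, 0 < tau < b - a -> 0 < s2 * q2 + (- s2 * 2 * s1 * c) * tau).
  { intros tau Ht. destruct (Hpos (a + tau) ltac:(lra)) as [_ H].
    rewrite (proj2 (regular_arc_phi (a + tau) ltac:(lra))) in H.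
    replace (a + tau - a) with tau in H by ring. unfold q2. nra. }
  pose proof (affine_pos_open_left _ _ (b - a) ltac:(lra) L1).
  pose proof (affine_pos_open_right _ _ (b - a) ltac:(lra) L1).
  pose proof (affine_pos_open_left _ _ (b - a) ltac:(lra) L2).
  pose proof (affine_pos_open_right _ _ (b - a) ltac:(lra) L2).
  pose proof (L1 ((b - a) / 2) ltac:(lra)). pose proof (L2 ((b - a) / 2) ltac:(lra)).
  destruct (regular_arc_phi b ltac:(lra)) as [P1 P2].
  split.
  - unfold switching_arc. rewrite P1, P2. fold q1 q2.
    repeat split; auto; nra.
  - unfold bang, bang_x, bang_y. simpl.
    rewrite (surjective_pairing (gamma b)), (regular_arc_x b), regular_arc_y by lra.
    f_equal. destruct Hs1 as [-> | ->], Hs2 as [-> | ->]; field.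
Qed.

End Arc.

Lemma regular_arc_exists_bang a b : 0 <= a -> a < b -> b <= T -> regular_on lam gamma a b ->
  exists s1 s2, bang_arc lam gamma c a b s1 s2.
Proof.
  intros Ha Hab Hb Hreg.
  destruct (regular_arc_signs a b Ha Hab Hb Hreg) as (s1 & s2 & Hs1 & Hs2 & Hpos).
  exists s1, s2. apply regular_arc_bang_arc; auto.
Qed.

End RegularArc.

Lemma ham_derivative_x l y w x0 :
  derivable_pt_lim (fun x => Ham l (x, y) w) x0 ((fst w - snd w) * snd l).
Proof. apply is_derive_Reals. unfold Ham, pairing, Y1, Y2. simpl. auto_derive; [auto|ring]. Qed.

Lemma ham_derivative_y l x w y0 : derivable_pt_lim (fun y => Ham l (x, y) w) y0 0.
Proof. unfold Ham, pairing, Y1, Y2. simpl. apply derivable_pt_lim_const. Qed.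

Lemma extremal_costate_derivative T lam gamma u : extremal_pair T lam gamma u ->
  exists N, negligible N /\ forall t, 0 < t < T -> ~ N t ->
    derivable_pt_lim (fun s => fst (lam s)) t (- (fst (u t) - snd (u t)) * snd (lam t)) /\
    derivable_pt_lim (fun s => snd (lam s)) t 0.
Proof.
  intros (_ & _ & _ & (N & HN & Hde) & _). exists N. split; auto. intros t Ht HNt.
  destruct (Hde t Ht HNt) as (dl1 & dl2 & dg1 & dg2 & D1 & D2 & _ & _ & D5 & D6 & _).
  assert (E1 : - dl1 = (fst (u t) - snd (u t)) * snd (lam t))
    by (eapply uniqueness_limite; [apply D5|apply ham_derivative_x]).
  assert (E2 : - dl2 = 0) by (eapply uniqueness_limite; [apply D6|apply ham_derivative_y]).
  split; [replace (- (fst (u t) - snd (u t)) * snd (lam t)) with dl1 by lra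
         |replace 0 with dl2 by lra]; auto.
Qed.

Lemma extremal_pair_bang_arcs T lam gamma u : extremal_pair T lam gamma u ->
  exists c, (forall t, 0 <= t <= T ->
               phi1 lam gamma t - phi2 lam gamma t = 2 * c * fst (gamma t)) /\
    forall a b, 0 <= a -> a < b -> b <= T -> regular_on lam gamma a b ->
      exists s1 s2, bang_arc lam gamma c a b s1 s2.
Proof.
  intros Hext.
  destruct (extremal_costate_derivative T lam gamma u Hext) as (Nl & HNl & Hdl).
  destruct Hext as (Hadm & [Hacl1 Hacl2] & _ & _ & (lam0 & _ & (Nh & HNh & Hh))).
  destruct (admissible_elim _ _ _ Hadm)
    as (HT & _ & _ & (Nu & HNu & Hu) & Hacx & Hacy & (Nd & HNd & Hd)).
  set (N := fun t => (Nu t \/ Nd t) \/ (Nl t \/ Nh t)).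
  assert (HN : negligible N) by (apply negligible_union; apply negligible_union; auto).
  set (c := snd (lam 0)).
  assert (Hl2 : forall t, 0 <= t <= T -> snd (lam t) = c).
  { intros t Ht.
    pose proof (ac_on_ae_derivative 0 t (fun s => snd (lam s)) 0 N ltac:(lra)
      (ac_on_sub 0 T 0 t _ Hacl2 ltac:(lra) ltac:(lra)) HN
      (fun tau Htau HNt => proj2 (Hdl tau ltac:(lra) ltac:(unfold N in HNt; tauto)))) as Hk.
    unfold c. simpl in Hk. lra. }
  exists c. split.
  - intros t Ht. unfold phi1, phi2, pairing, Y1, Y2. simpl. rewrite Hl2 by auto. ring.
  - intros a b Ha Hab Hb Hreg.
    apply (regular_arc_exists_bang T c gamma lam u N Hacx Hacy Hacl1 HN); auto;
      intros t Ht HNt; unfold N in HNt.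
    + apply Hu; auto; tauto.
    + apply Hd; auto; tauto.
    + rewrite <- (Hl2 t) by lra. apply Hdl; auto; tauto.
    + destruct (Hh t Ht ltac:(tauto)) as [E1 E2]. unfold phi1, phi2. unfold Ham in E1. lra.
Qed.

Lemma maximal_arcs_overlap T lam gamma a b a' b' :
  maximal_regular_arc T lam gamma a b -> maximal_regular_arc T lam gamma a' b' ->
  Rmax a a' < Rmin b b' -> a = a' /\ b = b'.
Proof.
  intros (H0 & H1 & H2 & H3 & H4) (H0' & H1' & H2' & H3' & H4') Hov.
  (* two overlapping regular arcs unite into a regular arc containing both *)
  assert (Hreg : regular_on lam gamma (Rmin a a') (Rmax b b')).
  { intros t Ht.
    assert (a < t < b \/ a' < t < b').
    { revert Ht Hov. unfold Rmin, Rmax.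
      destruct (Rle_dec a a'), (Rle_dec b b'), (Rle_dec a' b), (Rle_dec a b');
      intros; destruct (Rlt_dec a t), (Rlt_dec t b); try (left; lra); right; lra. }
    destruct H; [apply H3|apply H3']; auto. }
  pose proof (Rmin_l a a'); pose proof (Rmin_r a a').
  pose proof (Rmax_l b b'); pose proof (Rmax_r b b').
  assert (0 <= Rmin a a') by (apply Rmin_glb; auto).
  assert (Rmax b b' <= T) by (apply Rmax_lub; auto).
  assert (E1 : Rmin a a' = a /\ Rmax b b' = b).
  { destruct (Req_dec (Rmin a a') a), (Req_dec (Rmax b b') b); auto; exfalso;
      apply (H4 (Rmin a a') (Rmax b b')); auto; lra. }
  assert (E2 : Rmin a a' = a' /\ Rmax b b' = b').
  { destruct (Req_dec (Rmin a a') a'), (Req_dec (Rmax b b') b'); auto; exfalso;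
      apply (H4' (Rmin a a') (Rmax b b')); auto; lra. }
  lra.
Qed.

Lemma maximal_arcs_junction T lam gamma a s b :
  maximal_regular_arc T lam gamma a s -> maximal_regular_arc T lam gamma s b ->
  phi1 lam gamma s = 0 \/ phi2 lam gamma s = 0.
Proof.
  intros (H0 & H1 & H2 & H3 & H4) (H0' & H1' & H2' & H3' & H4').
  apply NNPP. intros Hn. apply (H4 a b); try lra.
  intros t Ht. destruct (Rtotal_order t s) as [Hts|[->|Hts]].
  - apply H3; lra.
  - split; intros E; apply Hn; auto.
  - apply H3'; lra.
Qed.

Lemma finite_avoid (F : list R) s T : s < T ->
  exists eta, 0 < eta /\ s + eta <= T /\ forall f, In f F -> ~ (s < f < s + eta).
Proof.
  intros H. induction F as [|f F (eta & H1 & H2 & H3)].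
  - exists (T - s). repeat split; try lra. intros f [].
  - destruct (Rlt_dec s f).
    + exists (Rmin eta (f - s)). pose proof (Rmin_l eta (f - s)); pose proof (Rmin_r eta (f - s)).
      repeat split; [apply Rmin_pos; lra|lra|].
      intros g [<-|Hg]; [lra|]. intros Hc; apply (H3 g Hg); lra.
    + exists eta. repeat split; auto. intros g [<-|Hg]; [lra|auto].
Qed.

Section ArcList.
Variables (T : R) (lam gamma : R -> R * R) (arcs : list (R * R)) (F : list R).
Hypotheses (Hmax : forall ab, In ab arcs -> maximal_regular_arc T lam gamma (fst ab) (snd ab))
  (Hcov : forall t, 0 <= t <= T -> (~ In t F <-> exists ab, In ab arcs /\ fst ab < t < snd ab)).

Lemma arc_overlap_eq a b a' b' : In (a, b) arcs -> In (a', b') arcs ->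
  Rmax a a' < Rmin b b' -> a = a' /\ b = b'.
Proof.
  intros Hin Hin'. apply (maximal_arcs_overlap T lam gamma); [apply (Hmax _ Hin)|apply (Hmax _ Hin')].
Qed.

(* Just after s, outside the finitely many non-regular times, some arc is running; it
   cannot have started before s, nor after s since its start would be a regular time. *)
Lemma next_arc s : 0 <= s < T -> (forall ab, In ab arcs -> fst ab < s -> snd ab <= s) ->
  exists b, In (s, b) arcs.
Proof.
  intros Hs Hleft. destruct (finite_avoid F s T ltac:(lra)) as (eta & He1 & He2 & He3).
  assert (Ht : ~ In (s + eta / 2) F) by (intros Hin; apply (He3 _ Hin); lra).
  apply Hcov in Ht; [|lra]. destruct Ht as ([a b] & Hin & Hab). simpl in Hab.
  destruct (Rtotal_order a s) as [Has|[->|Has]].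
  - specialize (Hleft _ Hin Has). simpl in Hleft. lra.
  - exists b; auto.
  - exfalso. pose proof (Hmax _ Hin) as (Ha0 & _). simpl in Ha0.
    assert (Ha : ~ In a F) by (intros Hin'; apply (He3 _ Hin'); lra).
    apply Hcov in Ha; [|lra]. destruct Ha as ([a' b'] & Hin' & Hab'). simpl in Hab'.
    destruct (arc_overlap_eq a b a' b' Hin Hin'); [|lra].
    unfold Rmax, Rmin. destruct (Rle_dec a a'), (Rle_dec b b'); lra.
Qed.

Lemma arc_end_after a0 s : In (a0, s) arcs ->
  forall ab, In ab arcs -> fst ab < s -> snd ab <= s.
Proof.
  intros Hin [a b] Hin' Ha. simpl in *. destruct (Rle_dec b s) as [|Hbs]; auto. exfalso.
  pose proof (Hmax _ Hin) as (_ & H1 & _). pose proof (Hmax _ Hin') as (H0' & H1' & _).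
  simpl in *. destruct (arc_overlap_eq a0 s a b Hin Hin'); [|lra].
  unfold Rmax, Rmin. destruct (Rle_dec a0 a), (Rle_dec s b); lra.
Qed.

Lemma consecutive_arcs k : NoDup arcs -> (k <= length arcs)%nat ->
  exists t : nat -> R, t O = 0 /\ (forall i, (i < k)%nat -> In (t i, t (S i)) arcs) /\
    forall x, 0 <= x < t k -> exists i, (i < k)%nat /\ t i <= x < t (S i).
Proof.
  intros Hnd. induction k as [|k IH]; intros Hk.
  { exists (fun _ => 0). repeat split; intros; [lia|lra]. }
  destruct (IH ltac:(lia)) as (t & Ht0 & Harcs & Hcover).
  assert (Htk0 : 0 <= t k).
  { destruct k as [|k]; [lra|]. destruct (Hmax _ (Harcs k ltac:(lia))) as (? & ? & _). simpl in *. lra. }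
  assert (HtkT : t k < T).
  { destruct (Rlt_dec (t k) T) as [|HT]; auto. exfalso.
    assert (Hincl : incl arcs (map (fun i => (t i, t (S i))) (seq 0 k))).
    { intros [a b] Hin. pose proof (Hmax _ Hin) as (Ha & Hab & Hb & _). simpl in *.
      destruct (Hcover a ltac:(lra)) as (i & Hi & Hai).
      destruct (arc_overlap_eq a b (t i) (t (S i)) Hin (Harcs i Hi)) as [-> ->].
      - pose proof (Hmax _ (Harcs i Hi)) as (_ & ? & _). simpl in *.
        unfold Rmax, Rmin. destruct (Rle_dec a (t i)), (Rle_dec b (t (S i))); lra.
      - apply in_map_iff. exists i. split; [reflexivity|apply in_seq; lia]. }
    pose proof (NoDup_incl_length Hnd Hincl). rewrite length_map, length_seq in H. lia. }
  destruct (next_arc (t k)) as [b Hb]; [lra| |].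
  { destruct k as [|k].
    - intros [a b'] Hin Ha. destruct (Hmax _ Hin). simpl in *. lra.
    - apply (arc_end_after (t k)), Harcs. lia. }
  exists (fun i => if Nat.eqb i (S k) then b else t i). cbv beta.
  rewrite Nat.eqb_refl. repeat split.
  - auto.
  - intros i Hi. destruct (Nat.eqb_spec i (S k)); [lia|].
    destruct (Nat.eqb_spec (S i) (S k)) as [E|]; [injection E as ->; auto|apply Harcs; lia].
  - intros x Hx. destruct (Rlt_dec x (t k)).
    + destruct (Hcover x ltac:(lra)) as (i & Hi & Hxi). exists i.
      destruct (Nat.eqb_spec i (S k)); [lia|]. destruct (Nat.eqb_spec (S i) (S k)); [lia|].
      split; [lia|auto].
    + exists k. destruct (Nat.eqb_spec k (S k)); [lia|]. rewrite Nat.eqb_refl. split; [lia|lra].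
Qed.

End ArcList.

Lemma scaled_trichotomy c d1 d2 d3 : 0 < d1 -> 0 < d2 -> 0 < d3 ->
  (0 < c * d1 /\ 0 < c * d2 /\ 0 < c * d3) \/ (c * d1 < 0 /\ c * d2 < 0 /\ c * d3 < 0) \/
  (c * d1 = 0 /\ c * d2 = 0 /\ c * d3 = 0).
Proof.
  intros Hd1 Hd2 Hd3. destruct (Rtotal_order c 0) as [Hc|[->|Hc]].
  - right; left. repeat split; nra.
  - right; right. repeat split; ring.
  - left. repeat split; nra.
Qed.

Lemma three_switching_arcs q1 q2 p1 p2 r1 r2 w1 w2 c d1 d2 d3 a1 a2 s1 s2 b1 b2 :
  switching_arc q1 q2 p1 p2 (c * d1) a1 a2 ->
  switching_arc p1 p2 r1 r2 (c * d2) s1 s2 ->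
  switching_arc r1 r2 w1 w2 (c * d3) b1 b2 ->
  0 < d1 -> 0 < d2 -> 0 < d3 -> (p1 = 0 \/ p2 = 0) -> (r1 = 0 \/ r2 = 0) ->
  b1 = - a1 /\ b2 = - a2 /\ ((a1 = s1 /\ a2 = - s2) \/ (a1 = - s1 /\ a2 = s2)) /\ c <> 0 /\
  (s1 = s2 -> r1 - r2 = - (p1 - p2)).
Proof.
  intros (Ha1 & Ha2 & Ep1 & Ep2 & A1 & A2 & A3 & A4 & A5 & A6)
         (Hs1 & Hs2 & Er1 & Er2 & S1 & S2 & S3 & S4 & S5 & S6)
         (Hb1 & Hb2 & Ew1 & Ew2 & B1 & B2 & B3 & B4 & B5 & B6) Hd1 Hd2 Hd3 Hp Hr.
  assert (Hc : c * d2 <> 0 -> c <> 0) by (intros H E; apply H; rewrite E; ring).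
  pose proof (scaled_trichotomy c d1 d2 d3 Hd1 Hd2 Hd3) as He.
  set (e1 := c * d1) in *. set (e2 := c * d2) in *. set (e3 := c * d3) in *.
  clearbody e1 e2 e3. subst p1 p2 r1 r2 w1 w2.
  destruct He as [He|[He|He]];
  destruct Ha1 as [-> | ->], Ha2 as [-> | ->], Hs1 as [-> | ->], Hs2 as [-> | ->];
  try (exfalso; lra);
  destruct Hb1 as [-> | ->], Hb2 as [-> | ->]; try (exfalso; lra);
  (split; [lra|split; [lra|split; [first [left; split; lra | right; split; lra]
                                  |split; [apply Hc; lra|intro; lra]]]]).
Qed.

Lemma sign_control_bounded s1 s2 : sign s1 -> sign s2 -> control_bounded (s1, s2).
Proof. intros H1 H2. split; apply sign_abs_le; auto. Qed.

Lemma horizontal_control_bounded (P Q : Prop) (b : {P} + {Q}) s : sign s ->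
  control_bounded (if b then (s, s) else (- s, - s)).
Proof. intros Hs. destruct b; apply sign_control_bounded; auto using sign_opp. Qed.

Lemma Rabs_sub_lt_add x y : 0 < x -> 0 < y -> Rabs (x - y) < x + y.
Proof. intros Hx Hy. unfold Rabs. destruct Rcase_abs; lra. Qed.

Lemma vhvh_two_bang_reachable a s d1 d2 d3 d4 p0 p1 p2 p3 : sign a -> sign s ->
  0 < d1 -> 0 < d2 -> 0 < d3 -> 0 < d4 ->
  p1 = bang (a, - a) d1 p0 -> p2 = bang (s, s) d2 p1 -> p3 = bang (- a, a) d3 p2 ->
  fst p2 = - fst p1 ->
  two_bang_reachable p0 (bang (- s, - s) d4 p3) (d1 + d2 + d3 + d4).
Proof.
  intros Ha Hs Hd1 Hd2 Hd3 Hd4 -> -> -> Hx.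
  exists (d1 + d3), (Rabs (d2 - d4)), (a, - a), (if Rle_dec d4 d2 then (s, s) else (- s, - s)).
  pose proof (Rabs_sub_lt_add d2 d4 Hd2 Hd4).
  repeat split; try lra; [apply Rabs_pos|apply sign_abs_le|apply sign_abs_le, sign_opp|
                          apply horizontal_control_bounded|apply horizontal_control_bounded|]; auto.
  destruct p0 as [x0 y0]. unfold bang, bang_x, bang_y in *. simpl in *.
  assert (Hx0 : x0 = - s * d2) by lra. subst x0.
  destruct (Rle_dec d4 d2); [rewrite Rabs_right by lra|rewrite Rabs_left by lra];
    destruct Ha as [-> | ->], Hs as [-> | ->]; simpl; f_equal; field.
Qed.

Lemma hvhv_two_bang_reachable a s d1 d2 d3 d4 p0 p1 p2 p3 : sign a -> sign s ->
  0 < d1 -> 0 < d2 -> 0 < d3 -> 0 < d4 ->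
  p1 = bang (s, s) d1 p0 -> p2 = bang (a, - a) d2 p1 -> p3 = bang (- s, - s) d3 p2 ->
  fst p3 = - fst p2 ->
  two_bang_reachable p0 (bang (- a, a) d4 p3) (d1 + d2 + d3 + d4).
Proof.
  intros Ha Hs Hd1 Hd2 Hd3 Hd4 -> -> -> Hx.
  exists (Rabs (d1 - d3)), (d2 + d4), (if Rle_dec d3 d1 then (s, s) else (- s, - s)), (- a, a).
  pose proof (Rabs_sub_lt_add d1 d3 Hd1 Hd3).
  repeat split; try lra; [apply Rabs_pos|apply horizontal_control_bounded
                         |apply horizontal_control_bounded|apply sign_abs_le, sign_opp
                         |apply sign_abs_le|]; auto.
  destruct p0 as [x0 y0]. unfold bang, bang_x, bang_y in *. simpl in *.
  assert (Hx0 : x0 = s * (d3 - 2 * d1)) by lra. subst x0.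
  destruct (Rle_dec d3 d1); [rewrite Rabs_right by lra|rewrite Rabs_left by lra];
    destruct Ha as [-> | ->], Hs as [-> | ->]; simpl; f_equal; field.
Qed.

Lemma four_bang_arcs_two_bang_reachable lam gamma c t0 t1 t2 t3 t4 a1 a2 s1 s2 b1 b2 f1 f2 :
  t0 < t1 -> t1 < t2 -> t2 < t3 -> t3 < t4 ->
  bang_arc lam gamma c t0 t1 a1 a2 -> bang_arc lam gamma c t1 t2 s1 s2 ->
  bang_arc lam gamma c t2 t3 b1 b2 -> bang_arc lam gamma c t3 t4 f1 f2 ->
  (phi1 lam gamma t1 = 0 \/ phi2 lam gamma t1 = 0) ->
  (phi1 lam gamma t2 = 0 \/ phi2 lam gamma t2 = 0) ->
  (phi1 lam gamma t3 = 0 \/ phi2 lam gamma t3 = 0) ->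
  (forall t, t0 <= t <= t4 -> phi1 lam gamma t - phi2 lam gamma t = 2 * c * fst (gamma t)) ->
  two_bang_reachable (gamma t0) (gamma t4) (t4 - t0).
Proof.
  intros H01 H12 H23 H34 [Sw1 G1] [Sw2 G2] [Sw3 G3] [Sw4 G4] J1 J2 J3 Hdiff.
  destruct (three_switching_arcs _ _ _ _ _ _ _ _ c _ _ _ _ _ _ _ _ _ Sw1 Sw2 Sw3)
    as (-> & -> & Hmid & Hc & Hx12); try lra.
  destruct (three_switching_arcs _ _ _ _ _ _ _ _ c _ _ _ _ _ _ _ _ _ Sw2 Sw3 Sw4)
    as (-> & -> & _ & _ & Hx23); try lra.
  destruct Sw1 as (Ha1 & Ha2 & _), Sw2 as (Hs1 & Hs2 & _).
  assert (Hreflect : forall ti tj, t0 <= ti <= t4 -> t0 <= tj <= t4 ->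
    phi1 lam gamma tj - phi2 lam gamma tj = - (phi1 lam gamma ti - phi2 lam gamma ti) ->
    fst (gamma tj) = - fst (gamma ti)).
  { intros ti tj Hi Hj E. rewrite !Hdiff in E by lra.
    apply (Rmult_eq_reg_l (2 * c)); [lra|]. intros E'. apply Hc. lra. }
  replace (t4 - t0) with ((t1 - t0) + (t2 - t1) + (t3 - t2) + (t4 - t3)) by ring.
  rewrite G4. destruct (Req_dec a1 a2) as [<-|Ha].
  - assert (Es : s2 = - s1) by (destruct Hmid as [[? ?]|[? ?]]; lra). subst s2.
    rewrite Ropp_involutive.
    apply (hvhv_two_bang_reachable s1 a1 _ _ _ _ _ (gamma t1) (gamma t2)); auto; try lra.
    apply Hreflect; [lra|lra|]. apply Hx23. reflexivity.
  - assert (Ea : a2 = - a1) by (destruct Ha1, Ha2; subst; lra). subst a2.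
    assert (Es : s2 = s1) by (destruct Hmid as [[? ?]|[? ?]]; lra). subst s2.
    rewrite Ropp_involutive in G3.
    apply (vhvh_two_bang_reachable a1 s1 _ _ _ _ _ (gamma t1) (gamma t2)); auto; try lra.
    apply Hreflect; [lra|lra|]. apply Hx12. reflexivity.
Qed.

Lemma four_maximal_arcs_not_minimizer T gamma lam u (t : nat -> R) :
  extremal_pair T lam gamma u -> t O = 0 ->
  (forall i, (i < 4)%nat -> maximal_regular_arc T lam gamma (t i) (t (S i))) ->
  ~ time_minimizer T gamma.
Proof.
  intros Hext Ht0 Hmax.
  destruct (extremal_pair_bang_arcs T lam gamma u Hext) as (c & Hdiff & Hbang).
  assert (Harc : forall i, (i < 4)%nat ->
    t i < t (S i) /\ exists s1 s2, bang_arc lam gamma c (t i) (t (S i)) s1 s2).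
  { intros i Hi. destruct (Hmax i Hi) as (? & ? & ? & ? & _). split; [auto|apply Hbang; auto]. }
  assert (Hjunction : forall i, (i < 3)%nat ->
    phi1 lam gamma (t (S i)) = 0 \/ phi2 lam gamma (t (S i)) = 0).
  { intros i Hi. apply (maximal_arcs_junction T lam gamma (t i) _ (t (S (S i)))); apply Hmax; lia. }
  destruct (Harc 0%nat) as (H01 & a1 & a2 & B1); [lia|].
  destruct (Harc 1%nat) as (H12 & s1 & s2 & B2); [lia|].
  destruct (Harc 2%nat) as (H23 & b1 & b2 & B3); [lia|].
  destruct (Harc 3%nat) as (H34 & f1 & f2 & B4); [lia|].
  destruct (Hmax 3%nat) as (_ & _ & H4 & _); [lia|].
  assert (Hreach : two_bang_reachable (gamma (t O)) (gamma (t 4%nat)) (t 4%nat - t O)).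
  { apply (four_bang_arcs_two_bang_reachable lam gamma c _ _ _ _ _ _ _ _ _ _ _ _ _
             H01 H12 H23 H34 B1 B2 B3 B4); try (apply (Hjunction _); lia).
    intros s Hs. apply Hdiff. destruct (Hmax 0%nat) as (? & _); [lia|]. lra. }
  rewrite Ht0, Rminus_0_r in Hreach.
  apply (two_bang_shortcut T gamma u (t 4%nat)); auto. apply Hext.
Qed.

Theorem mainTheorem8 (T : R) (gamma : R -> R * R) (n : nat) :
  regular_bang_bang_arcs T gamma n -> (4 <= n)%nat -> ~ time_minimizer T gamma.
Proof.
  intros (u & lam & arcs & F & Hext & Hnd & Hlen & Hmax & Hcov) Hn.
  destruct (consecutive_arcs T lam gamma arcs F Hmax Hcov 4 Hnd ltac:(lia)) as (t & Ht0 & Harcs & _).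
  apply (four_maximal_arcs_not_minimizer T gamma lam u t Hext Ht0).
  intros i Hi. apply (Hmax _ (Harcs i Hi)).
Qed.
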